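(* Let $(M,d)$ be a pointed metric space and let $\nu\in ba(\widetilde M)$. Then there exists a positive $\mu\in ba(\widetilde M)$ with $\Phi^*\mu=\Phi^*\nu$ and $\|\mu\|=\|\nu\|$. Consequently, for every $F\in\mathrm{Lip}_0(M)^*$ there exists a positive $\mu\in ba(\widetilde M)$ with $\Phi^*\mu=F$ and $\|\mu\|=\|F\|$.
   Context: $(M,d)$ is a metric space with base point $0$; $\mathrm{Lip}_0(M)$ is the real Banach space of Lipschitz $f\colon M\to\mathbb R$ with $f(0)=0$, normed by the best Lipschitz constant. $\widetilde M=\{(x,y)\in M\times M: x\neq y\}$. $ba(\widetilde M)$ is the Banach space of bounded finitely additive signed measures on the power set of $\widetilde M$, with norm $\|\mu\|=|\mu|(\widetilde M)$. The de Leeuw map $\Phi\colon\mathrm{Lip}_0(M)\to\ell_\infty(\widetilde M)$, $\Phi f(x,y)=(f(x)-f(y))/d(x,y)$, is a linear isometry; $\Phi^*\mu\in \mathrm{Lip}_0(M)^*$ denotes $(\Phi^*\mu)(f)=\int_{\widetilde M}\Phi f\,d\mu$. *)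

From mathcomp Require Import all_boot all_order all_algebra.
From mathcomp Require Import boolp classical_sets reals.
Set Implicit Arguments. Unset Strict Implicit. Unset Printing Implicit Defensive.
Import Order.TTheory GRing.Theory Num.Theory.
Local Open Scope classical_set_scope.
Local Open Scope ring_scope.

Section Defs.
Variable R : realType.

Definition is_metric (M : Type) (d : M -> M -> R) : Prop :=
  (forall x y, d x y = 0 <-> x = y) /\
  (forall x y, d x y = d y x) /\
  (forall x y z, d x z <= d x y + d y z).

Definition Mtilde (M : Type) := {p : M * M | p.1 <> p.2}.

Definition lipschitz (M : Type) (d : M -> M -> R) (f : M -> R) : Prop :=
  exists L : R, forall x y, `|f x - f y| <= L * d x y.

Definition Lip0 (M : Type) (d : M -> M -> R) (x0 : M) (f : M -> R) : Prop :=
  lipschitz d f /\ f x0 = 0.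

Definition lipnorm (M : Type) (d : M -> M -> R) (f : M -> R) : R :=
  sup [set r | exists x y, x <> y /\ r = `|f x - f y| / d x y].

Definition deLeeuw (M : Type) (d : M -> M -> R) (f : M -> R) : Mtilde M -> R :=
  fun p => (f (sval p).1 - f (sval p).2) / d (sval p).1 (sval p).2.

Definition is_partition (T : Type) (s : seq (set T)) : Prop :=
  (forall i j, (i < j)%N -> (j < size s)%N -> nth set0 s i `&` nth set0 s j = set0) /\
  \big[setU/set0]_(A <- s) A = setT.

Definition is_ba (T : Type) (mu : set T -> R) : Prop :=
  mu set0 = 0 /\
  (forall A B, A `&` B = set0 -> mu (A `|` B) = mu A + mu B) /\
  (exists C : R, forall A, `|mu A| <= C).

Definition positive_measure (T : Type) (mu : set T -> R) : Prop :=
  forall A, 0 <= mu A.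

Definition ba_norm (T : Type) (mu : set T -> R) : R :=
  sup [set r | exists s : seq (set T), is_partition s /\
                 r = \sum_(A <- s) `|mu A|].

(** I is the integral of the bounded function g w.r.t. mu: limit of the
   integrals of simple functions converging uniformly to g.  A simple
   function is given as a list of (value, set) with the sets forming a
   partition. *)
Definition is_ba_integral (T : Type) (mu : set T -> R) (g : T -> R) (I : R) : Prop :=
  forall eps : R, 0 < eps -> exists delta : R, 0 < delta /\
    forall s : seq (R * set T),
      is_partition (map snd s) ->
      (forall i, (i < size s)%N -> forall x, (nth (0, set0) s i).2 x ->
          `|g x - (nth (0, set0) s i).1| <= delta) ->
      `|\sum_(p <- s) p.1 * mu p.2 - I| <= eps.

Definition ba_integral (T : Type) (mu : set T -> R) (g : T -> R) : R :=
  xget 0 [set I | is_ba_integral mu g I].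

Definition Phistar (M : Type) (d : M -> M -> R) (mu : set (Mtilde M) -> R)
  (f : M -> R) : R := ba_integral mu (deLeeuw d f).

(** F is an element of Lip_0(M)^* (only its values on Lip_0(M) matter) *)
Definition Lip0_dual (M : Type) (d : M -> M -> R) (x0 : M) (F : (M -> R) -> R) : Prop :=
  (forall (f g : M -> R) (a : R), Lip0 d x0 f -> Lip0 d x0 g ->
      F (fun x => f x + a * g x) = F f + a * F g) /\
  (exists C : R, forall f, Lip0 d x0 f -> `|F f| <= C * lipnorm d f).

Definition dual_norm (M : Type) (d : M -> M -> R) (x0 : M) (F : (M -> R) -> R) : R :=
  sup [set r | exists f, Lip0 d x0 f /\ lipnorm d f <= 1 /\ r = `|F f|].

End Defs.

From mathcomp Require Import all_boot all_order all_algebra.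
From mathcomp Require Import boolp classical_sets functions reals numfun.
From mathcomp Require Import ring lra.
Set Implicit Arguments. Unset Strict Implicit. Unset Printing Implicit Defensive.
Import Order.TTheory GRing.Theory Num.Theory.
Local Open Scope classical_set_scope.
Local Open Scope ring_scope.

(* Both parts follow from one representation result: a linear functional V on
   Lip_0(M) with V f <= K * sup |Phi f| is Phi^* mu for a positive mu with
   ||mu|| = K (take K = ||nu|| for Phi^* nu, and K = ||F|| for F).  On the
   subspace of bounded functions on M~ spanned by Phi(Lip_0(M)) and the
   constants, put Phi f + c |-> V f + c K.  It is dominated by the sublinear
   functional p g = K * sup g, because Phi f (y, x) = - Phi f (x, y) turns
   sup (Phi f + c) into a bound for |Phi f|.  Hahn-Banach extends it to all
   bounded functions, still below p; such an extension L is positive, so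
   A |-> L 1_A is a positive finitely additive measure whose integral is L
   and whose total variation is L 1 = K.  The integral against a bounded
   additive nu is the limit of the sums over finite partitions on which the
   integrand oscillates by less than e; common refinements of two partitions
   show that these sums are Cauchy, linear, and bounded by ||nu|| sup |g|. *)

Section disjoint_sequences.
Variable T : Type.
Implicit Types (A B : set T) (s t : seq (set T)).

Lemma is_partitionP s :
  is_partition s <-> pairwise disj_set s /\ \big[setU/set0]_(A <- s) A = setT.
Proof.
split=> -[ps us]; split=> //.
  apply/(pairwiseP set0) => i j; rewrite -!topredE /= => _ js ij.
  by apply/disj_set2P; exact: ps.
move=> i j ij js; move/(pairwiseP set0): ps => ps.
by apply/disj_set2P/ps; rewrite -?topredE //= (ltn_trans ij).
Qed.

Lemma setI_bigsetUr A s :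
  A `&` \big[setU/set0]_(B <- s) B = \big[setU/set0]_(B <- s) (A `&` B).
Proof. exact: big_distrr. Qed.

Lemma all_disj_setP A s :
  reflect (A `&` \big[setU/set0]_(B <- s) B = set0) (all (disj_set A) s).
Proof.
apply: (iffP allP) => [As|AsU B Bs].
  by rewrite setI_bigsetUr big1_seq // => B /andP[_ /As /disj_set2P].
apply/disj_set2P; rewrite -subset0 -AsU; apply: setIS.
by rewrite -bigcup_seq; exact: bigcup_sup.
Qed.

Lemma pairwise_disj_set_sub (f : set T -> set T) s :
  (forall A, f A `<=` A) -> pairwise disj_set s -> pairwise disj_set (map f s).
Proof.
move=> fA; rewrite pairwise_map; apply: sub_pairwise => A B /disj_set2P AB.
by apply/disj_set2P; rewrite -subset0 -AB; exact: setISS.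
Qed.

Lemma pairwise_disj_set_allpairs s t : pairwise disj_set s -> pairwise disj_set t ->
  pairwise disj_set [seq A `&` B | A <- s, B <- t].
Proof.
move=> + pt; elim: s => [//|A s IH] /= /andP[As ps].
rewrite pairwise_cat IH // andbT; apply/andP; split.
  apply/allrelP => _ _ /mapP[B _ ->] /allpairsP[[A' B'] [/= A's _ ->]].
  apply/disj_set2P; rewrite -subset0 -(disj_set2P (allP As A' A's)).
  by move=> x [[? _] [? _]].
by apply: pairwise_disj_set_sub pt => B; exact: subIsetr.
Qed.

Lemma is_partition_allpairs s t : is_partition s -> is_partition t ->
  is_partition [seq A `&` B | A <- s, B <- t].
Proof.
move=> /is_partitionP[ps us] /is_partitionP[pt ut].
apply/is_partitionP; split; first exact: pairwise_disj_set_allpairs.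
by rewrite big_allpairs_dep; under eq_bigr do rewrite -setI_bigsetUr ut setIT.
Qed.

End disjoint_sequences.

Section additive.
Variables (T : Type) (R : nmodType) (nu : set T -> R).
Hypothesis nu0 : nu set0 = 0.
Hypothesis nuD : forall A B, A `&` B = set0 -> nu (A `|` B) = nu A + nu B.

Lemma additive_bigsetU s : pairwise disj_set s ->
  nu (\big[setU/set0]_(A <- s) A) = \sum_(A <- s) nu A.
Proof.
elim: s => [|A s IH] /=; first by rewrite !big_nil.
by move=> /andP[/all_disj_setP As ps]; rewrite !big_cons nuD ?IH.
Qed.

Lemma additive_refine t B : is_partition t -> nu B = \sum_(A <- t) nu (B `&` A).
Proof.
move=> /is_partitionP[pt ut].
rewrite -(big_map (setI B) xpredT) -additive_bigsetU.
  by rewrite big_map -setI_bigsetUr ut setIT.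
by apply: pairwise_disj_set_sub pt => A; exact: subIsetr.
Qed.

End additive.

Section variation.
Variables (T : Type) (R : realType) (nu : set T -> R).
Hypothesis nu0 : nu set0 = 0.
Hypothesis nuD : forall A B, A `&` B = set0 -> nu (A `|` B) = nu A + nu B.
Variable C : R.
Hypothesis nuC : forall A, `|nu A| <= C.

Lemma sum_norm_disj_le s : pairwise disj_set s -> \sum_(A <- s) `|nu A| <= C *+ 2.
Proof.
move=> ps; pose pos A := if 0 <= nu A then A else set0.
pose neg A := if 0 <= nu A then set0 else A.
have normE A : `|nu A| = nu (pos A) - nu (neg A).
  rewrite /pos /neg; case: ifPn => [/ger0_norm|]; rewrite nu0 ?subr0 //.
  by rewrite -ltNge => /ltr0_norm ->; rewrite sub0r.
have posA A : pos A `<=` A by rewrite /pos; case: ifP => _ x.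
have negA A : neg A `<=` A by rewrite /neg; case: ifP => _ x.
under eq_bigr do rewrite normE.
rewrite sumrB -(big_map pos xpredT nu) -(big_map neg xpredT nu).
rewrite -!(additive_bigsetU nu0 nuD) ?(pairwise_disj_set_sub _ ps) //.
have := nuC (\big[setU/set0]_(A <- map pos s) A).
have := nuC (\big[setU/set0]_(A <- map neg s) A).
by rewrite !ler_norml mulr2n => /andP[? ?] /andP[? ?]; lra.
Qed.

Lemma le_ba_norm s : is_partition s -> \sum_(A <- s) `|nu A| <= ba_norm nu.
Proof.
move=> hs; apply: ub_le_sup; last by exists s.
by exists (C *+ 2) => _ [t [/is_partitionP[pt _] ->]]; exact: sum_norm_disj_le.
Qed.

Lemma ba_norm_ge0 : 0 <= ba_norm nu.
Proof.
have sT : is_partition [:: @setT T] by apply/is_partitionP; rewrite big_seq1.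
by apply: le_trans (le_ba_norm sT); rewrite big_seq1.
Qed.

End variation.

Lemma ba_norm_positive (T : Type) (R : realType) (mu : set T -> R) :
  mu set0 = 0 -> (forall A B, A `&` B = set0 -> mu (A `|` B) = mu A + mu B) ->
  positive_measure mu -> ba_norm mu = mu setT.
Proof.
move=> mu0 muD mu_ge0; rewrite /ba_norm (_ : [set r | _] = [set mu setT]) ?sup1 //.
apply/seteqP; split=> [_ [s [/is_partitionP[ps sT] ->]]|_ ->] /=.
  under eq_bigr do rewrite ger0_norm ?mu_ge0 //.
  by rewrite -(additive_bigsetU mu0 muD ps) sT.
exists [:: setT]; rewrite big_seq1 ger0_norm ?mu_ge0 //; split=> //.
by apply/is_partitionP; rewrite big_seq1.
Qed.

Lemma ler_add_mulgt0 (R : realFieldType) (x y c : R) : 0 <= c ->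
  (forall d, 0 < d -> x <= y + d * c) -> x <= y.
Proof.
move=> c0 H; apply/ler_addgt0Pr => e e0.
have d0 : 0 < e / (c + 1) by rewrite divr_gt0 // ltr_wpDl.
apply: le_trans (H _ d0) _; rewrite lerD2l mulrAC ler_pdivrMr ?ltr_wpDl //.
by rewrite mulrDr mulr1 lerDl ltW.
Qed.

Lemma comb_functional0 (U : Type) (R : pzRingType) (P : (U -> R) -> Prop)
    (V : (U -> R) -> R) : P (fun _ => 0) ->
  (forall f g a, P f -> P g -> V (fun x => f x + a * g x) = V f + a * V g) ->
  V (fun _ => 0) = 0.
Proof.
move=> P0 /(_ _ _ 1 P0 P0).
rewrite (_ : (fun _ => _) = fun _ => 0); last by apply/funext => x; rewrite mulr0 addr0.
by rewrite mul1r => /eqP; rewrite addrC -subr_eq subrr eq_sym => /eqP.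
Qed.

Lemma indic_setU {R : pzRingType} {T} (A B : set T) x : A `&` B = set0 ->
  \1_(A `|` B) x = \1_A x + \1_B x :> R.
Proof.
move=> AB; rewrite !indicE in_setU.
have [xA|xA] := boolP (x \in A); have [xB|xB] := boolP (x \in B);
  rewrite ?addr0 ?add0r //=.
by move: xA xB; rewrite !inE => ? ?; have : (A `&` B) x by []; rewrite AB.
Qed.

Section step_functions.
Variables (T : Type) (R : realType).
Implicit Types (g h : T -> R) (s t : seq (R * set T)) (mu : set T -> R) (e : R).

Definition bounded g := exists B, forall x, `|g x| <= B.

Lemma bounded_cst (c : R) : bounded (fun _ : T => c).
Proof. by exists `|c|. Qed.

Lemma boundedD g h : bounded g -> bounded h -> bounded (fun x => g x + h x).
Proof.
move=> [B1 gB] [B2 hB]; exists (B1 + B2) => x.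
by rewrite (le_trans (ler_normD _ _)) // lerD.
Qed.

Lemma boundedZ (a : R) g : bounded g -> bounded (fun x => a * g x).
Proof. by move=> [B gB]; exists (`|a| * B) => x; rewrite normrM ler_wpM2l. Qed.

Lemma bounded_comb g h a : bounded g -> bounded h -> bounded (fun x => g x + a * h x).
Proof. by move=> bg bh; apply/boundedD/boundedZ. Qed.

Lemma normr_indic_le1 (A : set T) x : `|\1_A x : R| <= 1.
Proof. by rewrite indicE; case: (x \in A); rewrite ?normr1 ?normr0. Qed.

Lemma bounded_indic (A : set T) : bounded (\1_A : T -> R).
Proof. by exists 1; exact: normr_indic_le1. Qed.

Definition step_approx g e s := is_partition (map snd s) /\
  forall p, p \in s -> forall x, p.2 x -> `|g x - p.1| <= e.

Definition step_sum mu s := \sum_(p <- s) p.1 * mu p.2.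

Definition step_fun s x := \sum_(p <- s) p.1 * \1_(p.2) x.

Lemma is_ba_integralP mu g I : is_ba_integral mu g I <->
  forall e, 0 < e -> exists2 d : R, 0 < d &
    forall s, step_approx g d s -> `|step_sum mu s - I| <= e.
Proof.
split=> H e /H.
  move=> [d [d0 Hd]]; exists d => // s [sP sg]; apply: Hd => // i si x.
  by apply: sg; exact: mem_nth.
move=> [d d0 Hd]; exists d; split=> // s sP sg; apply: Hd; split=> // p.
by move=> /(nthP (0, set0))[i si <-]; exact: sg.
Qed.

Lemma step_approx_le g e e' s : e <= e' -> step_approx g e s -> step_approx g e' s.
Proof. by move=> ee' [ps sg]; split=> // p sp x px; rewrite (le_trans (sg p sp x px)). Qed.

Lemma step_approx_slab g e a n (D : set T) : 0 < e ->
  (forall x, D x -> a <= g x < a + n%:R * e) ->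
  exists s, [/\ pairwise disj_set (map snd s), \big[setU/set0]_(A <- map snd s) A = D
    & forall p, p \in s -> forall x, p.2 x -> `|g x - p.1| <= e].
Proof.
move=> e0; elim: n a D => [|n IH] a D gD.
  exists [::]; split=> //; rewrite big_nil; apply/seteqP; split=> // x Dx.
  by have := gD x Dx; rewrite mul0r addr0 => /andP[]; lra.
pose D1 := D `&` [set x | g x < a + e]; pose D2 := D `&` [set x | a + e <= g x].
have [s [ps sD2 sg]] : exists s, [/\ pairwise disj_set (map snd s),
    \big[setU/set0]_(A <- map snd s) A = D2
    & forall p, p \in s -> forall x, p.2 x -> `|g x - p.1| <= e].
  apply: (IH (a + e)) => x [Dx /= h]; apply/andP; split=> //.
  by have /andP[_] := gD x Dx; rewrite -natr1 mulrDl mul1r [_ * e + e]addrC addrA.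
exists ((a, D1) :: s); split => /=.
- rewrite ps andbT; apply/all_disj_setP; rewrite sD2 -subset0.
  by move=> x [[_ /= ?] [_ /= ?]]; lra.
- rewrite big_cons sD2; apply/seteqP; split=> [x [] []//|x Dx].
  by have [h|h] := ltP (g x) (a + e); [left|right].
- move=> p; rewrite inE => /orP[/eqP -> x [Dx /= h]|]; last exact: sg.
  by have /andP[? _] := gD x Dx; rewrite /= ger0_norm; lra.
Qed.

Lemma step_approx_exists g e : bounded g -> 0 < e -> exists s, step_approx g e s.
Proof.
move=> [B gB] e0; pose n := Num.bound (2 * `|B| / e).
have nB : 2 * `|B| < n%:R * e.
  by rewrite -ltr_pdivrMr // archi_boundP // divr_ge0 ?mulr_ge0 // ltW.
have [|s [ps sT sg]] := @step_approx_slab g e (- `|B|) n setT e0.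
  move=> x _; have := gB x; have := ler_norm B; move: (n%:R * e) nB => ne nB.
  by rewrite ler_norml => ? /andP[? ?]; apply/andP; split; lra.
by exists s; split=> //; apply/is_partitionP.
Qed.

Definition step_comb (a : R) s t :=
  [seq (p.1 + a * q.1, p.2 `&` q.2) | p <- s, q <- t].

Lemma step_approx_comb g h a e1 e2 s t :
  step_approx g e1 s -> step_approx h e2 t ->
  step_approx (fun x => g x + a * h x) (e1 + `|a| * e2) (step_comb a s t).
Proof.
move=> [ps sg] [pt th]; split.
  suff -> : map snd (step_comb a s t) =
      [seq A `&` B | A <- map snd s, B <- map snd t] by exact: is_partition_allpairs.
  by rewrite map_allpairs allpairs_mapl allpairs_mapr.
move=> _ /allpairsP[[p q] [/= sp tq ->]] x [/= px qx].
have -> : g x + a * h x - (p.1 + a * q.1) = (g x - p.1) + a * (h x - q.1) by ring.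
by rewrite (le_trans (ler_normD _ _)) // normrM lerD ?sg // ler_wpM2l ?th.
Qed.

Lemma step_sum_comb mu a s t :
  mu set0 = 0 -> (forall A B, A `&` B = set0 -> mu (A `|` B) = mu A + mu B) ->
  is_partition (map snd s) -> is_partition (map snd t) ->
  step_sum mu (step_comb a s t) = step_sum mu s + a * step_sum mu t.
Proof.
move=> mu0 muD ps pt.
have refine (u : seq (R * set T)) B :
    is_partition (map snd u) -> mu B = \sum_(q <- u) mu (B `&` q.2).
  by move=> pu; rewrite (additive_refine mu0 muD B pu) big_map.
rewrite /step_sum big_allpairs_dep /=.
under eq_bigr do under eq_bigr do rewrite mulrDl -mulrA.
under eq_bigr do rewrite big_split /= -mulr_sumr -refine //.
rewrite big_split /= exchange_big mulr_sumr; congr (_ + _).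
apply: eq_bigr => q _; rewrite -mulr_sumr -mulr_sumr (refine s q.2) //.
by congr (_ * (_ * _)); apply: eq_bigr => p _; rewrite setIC.
Qed.

Lemma bounded_step_fun s : bounded (step_fun s).
Proof.
exists (\sum_(p <- s) `|p.1|) => x; rewrite (le_trans (ler_norm_sum _ _ _)) //.
by apply: ler_sum => p _; rewrite normrM ler_piMr ?normr_indic_le1.
Qed.

Lemma sum_indic_partition s x : is_partition (map snd s) ->
  \sum_(p <- s) \1_(p.2) x = 1 :> R.
Proof.
move=> /is_partitionP[ps sT].
rewrite -(big_map snd xpredT (fun A => \1_A x)) -(additive_bigsetU _ _ ps) ?sT ?indicT //.
  by rewrite indic0.
by move=> A B; exact: indic_setU.
Qed.

Lemma step_fun_approx g e s : step_approx g e s -> forall x, `|step_fun s x - g x| <= e.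
Proof.
move=> [ps sg] x; rewrite -[g x]mulr1 -(sum_indic_partition x ps) mulr_sumr -sumrB.
rewrite (le_trans (ler_norm_sum _ _ _)) // -[e]mulr1 -(sum_indic_partition x ps).
rewrite mulr_sumr big_seq [X in _ <= X]big_seq; apply: ler_sum => p sp.
rewrite -mulrBl normrM indicE; case: (boolP (x \in p.2)) => [xp|_].
  by rewrite normr1 !mulr1 distrC sg // -inE.
by rewrite normr0 !mulr0.
Qed.

Lemma is_ba_integral_unique mu g I J : bounded g ->
  is_ba_integral mu g I -> is_ba_integral mu g J -> I = J.
Proof.
move=> bg /is_ba_integralP HI /is_ba_integralP HJ; apply/eqP.
rewrite -subr_eq0 -normr_le0; apply: (@ler_add_mulgt0 _ _ _ 2) => // e e0.
have [d1 d10 H1] := HI e e0; have [d2 d20 H2] := HJ e e0.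
have d0 : 0 < Num.min d1 d2 by rewrite lt_min d10 d20.
have m1 : Num.min d1 d2 <= d1 by rewrite ge_min lexx.
have m2 : Num.min d1 d2 <= d2 by rewrite ge_min lexx orbT.
have [s sg] := step_approx_exists bg d0.
have := H1 s (step_approx_le m1 sg); have := H2 s (step_approx_le m2 sg).
move: (step_sum mu s) => S; rewrite add0r !ler_norml => /andP[? ?] /andP[? ?].
by apply/andP; split; lra.
Qed.

Lemma ba_integralE mu g I : bounded g -> is_ba_integral mu g I -> ba_integral mu g = I.
Proof.
move=> bg HI; apply: xget_unique => // J HJ.
exact: is_ba_integral_unique bg HJ HI.
Qed.

Lemma ba_integral0 g : bounded g -> ba_integral (fun _ => 0) g = 0.
Proof.
move=> bg; apply: ba_integralE bg _ => e e0; exists 1; split=> // s _ _.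
by rewrite big1 ?subrr ?normr0 ?ltW // => p _; rewrite mulr0.
Qed.

End step_functions.
Arguments bounded_cst {T R}.
Arguments bounded_indic {T R}.
Arguments normr_indic_le1 {T R}.

Section ba_integral.
Variables (T : Type) (R : realType) (nu : set T -> R).
Hypothesis nu0 : nu set0 = 0.
Hypothesis nuD : forall A B, A `&` B = set0 -> nu (A `|` B) = nu A + nu B.
Variable C : R.
Hypothesis nuC : forall A, `|nu A| <= C.
Implicit Types (g h : T -> R) (s t : seq (R * set T)) (e B : R).
Local Notation N := (ba_norm nu).

Let N0 : 0 <= N := ba_norm_ge0 nu0 nuD nuC.

Lemma norm_step_sum_le g B e s : 0 <= B -> 0 <= e -> step_approx g e s ->
  (forall x, `|g x| <= B) -> `|step_sum nu s| <= (B + e) * N.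
Proof.
move=> B0 e0 [ps sg] gB; apply: le_trans (ler_norm_sum _ _ _) _.
rewrite big_seq (le_trans (ler_sum _ (_ : forall p, p \in s ->
    `|p.1 * nu p.2| <= (B + e) * `|nu p.2|))) //; last first.
  rewrite -big_seq -mulr_sumr ler_wpM2l ?addr_ge0 //.
  by have := le_ba_norm nu0 nuD nuC ps; rewrite big_map.
move=> p sp; have [[x px]|] := pselect (exists x, p.2 x).
  rewrite normrM ler_wpM2r // -[p.1](subKr (g x)) (le_trans (ler_normD _ _)) //.
  by rewrite normrN lerD ?sg.
move=> nx; have -> : p.2 = set0 by apply/seteqP; split=> // x px; apply: nx; exists x.
by rewrite nu0 mulr0 normr0 mulr0.
Qed.

Lemma step_sum_close g e1 e2 s t : 0 <= e1 -> 0 <= e2 ->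
  step_approx g e1 s -> step_approx g e2 t ->
  `|step_sum nu s - step_sum nu t| <= (e1 + e2) * N.
Proof.
move=> e10 e20 gs gt.
have := norm_step_sum_le (lexx 0) _ (step_approx_comb (-1) gs gt).
rewrite (step_sum_comb (-1) nu0 nuD gs.1 gt.1) mulN1r normrN normr1 mul1r add0r.
by apply=> [|x]; [exact: addr_ge0|rewrite mulN1r subrr normr0].
Qed.

Lemma step_sum_limit g : bounded g -> exists I, forall e s, 0 < e ->
  step_approx g e s -> `|step_sum nu s - I| <= e * N.
Proof.
move=> bg; pose E := [set r | exists2 e, 0 < e &
  exists2 s, step_approx g e s & r = step_sum nu s - e * N].
have close e s : 0 < e -> step_approx g e s -> ubound E (step_sum nu s + e * N).
  move=> e0 gs _ [e' e'0 [s' gs' ->]].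
  have := step_sum_close (ltW e'0) (ltW e0) gs' gs.
  by rewrite ler_norml mulrDl => /andP[_ ?]; lra.
have [s1 gs1] := step_approx_exists bg ltr01.
exists (sup E) => e s e0 gs; rewrite ler_norml; apply/andP; split.
  suff : sup E <= step_sum nu s + e * N by lra.
  by apply: ge_sup; [exists (step_sum nu s1 - 1 * N), 1 => //; exists s1|exact: close].
suff : step_sum nu s - e * N <= sup E by lra.
by apply: ub_le_sup; [exists (step_sum nu s1 + 1 * N); exact: close|exists e => //; exists s].
Qed.

Lemma ba_integral_approx g e s : bounded g -> 0 < e -> step_approx g e s ->
  `|step_sum nu s - ba_integral nu g| <= e * N.
Proof.
move=> bg; have [I HI] := step_sum_limit bg.
suff -> : ba_integral nu g = I by exact: HI.
apply: ba_integralE bg _; apply/is_ba_integralP => eps eps0.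
have d0 : 0 < eps / (N + 1) by rewrite divr_gt0 // ltr_wpDl.
exists (eps / (N + 1)) => // t gt; apply: le_trans (HI _ _ d0 gt) _.
by rewrite mulrAC ler_pdivrMr ?ltr_wpDl // mulrDr mulr1 lerDl ltW.
Qed.

Lemma ba_integral_lin g h a : bounded g -> bounded h ->
  ba_integral nu (fun x => g x + a * h x) = ba_integral nu g + a * ba_integral nu h.
Proof.
move=> bg bh; apply/eqP; rewrite -subr_eq0 -normr_le0.
apply: (@ler_add_mulgt0 _ _ _ ((2 + 2 * `|a|) * N)) => [|d d0].
  by rewrite mulr_ge0 // addr_ge0 // mulr_ge0.
have [s gs] := step_approx_exists bg d0; have [t ht] := step_approx_exists bh d0.
have d'0 : 0 < d + `|a| * d by rewrite ltr_wpDr // mulr_ge0 // ltW.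
have := ba_integral_approx (bounded_comb a bg bh) d'0 (step_approx_comb a gs ht).
rewrite (step_sum_comb a nu0 nuD gs.1 ht.1).
have := ba_integral_approx bg d0 gs; have := ba_integral_approx bh d0 ht.
move: (ba_integral nu _) (ba_integral nu g) (ba_integral nu h) => Iw Ig Ih.
move: (step_sum nu s) (step_sum nu t) => Ss St /(ler_wpM2l (normr_ge0 a)) Ht Hs Hw.
have -> : Iw - (Ig + a * Ih) = - (Ss + a * St - Iw) + (Ss - Ig) + a * (St - Ih) by ring.
rewrite add0r (le_trans (ler_normD _ _)) // (le_trans (lerD (ler_normD _ _) (lexx _))) //.
rewrite normrN normrM.
have -> : d * ((2 + 2 * `|a|) * N) = (d + `|a| * d) * N + d * N + `|a| * (d * N) by ring.
lra.
Qed.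

Lemma ba_integral_norm_le g B : 0 <= B -> (forall x, `|g x| <= B) ->
  `|ba_integral nu g| <= B * N.
Proof.
move=> B0 gB; have bg : bounded g by exists B.
apply: (@ler_add_mulgt0 _ _ _ (2 * N)) => [|d d0]; first exact: mulr_ge0.
have [s gs] := step_approx_exists bg d0.
have := norm_step_sum_le B0 (ltW d0) gs gB; have := ba_integral_approx bg d0 gs.
have := ler_normB (step_sum nu s) (step_sum nu s - ba_integral nu g).
rewrite opprB addrC subrK.
have -> : (B + d) * N = B * N + d * N by ring.
have -> : d * (2 * N) = d * N + d * N by ring.
lra.
Qed.

End ba_integral.

Section hahn_banach.
Variables (R : realType) (V : lmodType R) (D : set V) (p : V -> R).
Hypothesis D0 : D 0.
Hypothesis DD : forall u v a, D u -> D v -> D (u + a *: v).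
Hypothesis p_subadd : forall u v, D u -> D v -> p (u + v) <= p u + p v.
Hypothesis p_homo : forall (t : R) u, 0 < t -> D u -> p (t *: u) = t * p u.
Implicit Types (G : set (V * R)) (u v : V) (r s : R).

Definition linear_graph G := [/\ G (0, 0),
  forall u r s, G (u, r) -> G (u, s) -> r = s &
  forall u v r s a, G (u, r) -> G (v, s) -> G (u + a *: v, r + a * s)].

Definition dominated G := forall u r, G (u, r) -> D u /\ r <= p u.

Lemma linear_graphZ G u r a : linear_graph G -> G (u, r) -> G (a *: u, a * r).
Proof. by case=> G0 _ GD /(GD _ _ _ _ a G0); rewrite !add0r. Qed.

Let DB u v : D u -> D v -> D (u - v).
Proof. by move=> Du Dv; rewrite -scaleN1r; exact: DD. Qed.

Let DZ a u : D u -> D (a *: u).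
Proof. by move=> Du; rewrite -[_ *: _]add0r; exact: DD. Qed.

Definition graph_ext G g0 c : set (V * R) :=
  [set e | exists u r t, G (u, r) /\ e = (u + t *: g0, r + t * c)].

Section extension.
Variables (G : set (V * R)) (g0 : V).
Hypotheses (Glin : linear_graph G) (Gdom : dominated G) (Dg0 : D g0).

Lemma graph_ext_bounds u v r s : G (u, r) -> G (v, s) ->
  r - p (u - g0) <= p (v + g0) - s.
Proof.
case: Glin => _ _ GD Gu Gv; have [Du _] := Gdom Gu; have [Dv _] := Gdom Gv.
have [_] := Gdom (GD _ _ _ _ 1 Gu Gv); rewrite scale1r mul1r.
have := p_subadd (DB Du Dg0) (DD 1 Dv Dg0); rewrite scale1r addrCA subrK addrC.
by move=> *; lra.
Qed.

Lemma exists_graph_ext_value : exists c, forall u r, G (u, r) ->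
  r - p (u - g0) <= c /\ c <= p (u + g0) - r.
Proof.
pose E := [set ur.2 - p (ur.1 - g0) | ur in G].
have [G00 _ _] := Glin.
have ubE u r : G (u, r) -> ubound E (p (u + g0) - r).
  by move=> Gu _ [[v s] Gv <-]; exact: graph_ext_bounds.
exists (sup E) => u r Gu; split; last first.
  by apply: ge_sup => //; [exists (0 - p (0 - g0)), (0, 0) | exact: ubE Gu].
by apply: ub_le_sup; [exists (p (0 + g0) - 0); exact: ubE G00 | exists (u, r)].
Qed.

Lemma sub_graph_ext c : G `<=` graph_ext G g0 c.
Proof. by move=> [u r] Gu; exists u, r, 0; rewrite scale0r mul0r !addr0. Qed.

Lemma graph_ext_point c : graph_ext G g0 c (g0, c).
Proof. by exists 0, 0, 1; have [G00 _ _] := Glin; rewrite scale1r mul1r !add0r. Qed.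

Lemma graph_ext_linear c : (forall r, ~ G (g0, r)) -> linear_graph (graph_ext G g0 c).
Proof.
move=> g0_out; have [G00 Gfun GD] := Glin; split.
- by exists 0, 0, 0; rewrite scale0r mul0r !addr0.
- move=> _ _ _ [u1 [r1 [t1 [G1 [-> ->]]]]] [u2 [r2 [t2 [G2 [E ->]]]]].
  move: E; have [<- E|t12 E] := eqVneq t1 t2.
    by move: G1; rewrite (addIr _ E) => G1; rewrite (Gfun _ _ _ G1 G2).
  have Eu : u1 - u2 = (t2 - t1) *: g0.
    by apply: (addIr (t1 *: g0)); rewrite addrAC E scalerBl subrK addrC addKr.
  case: (g0_out ((t2 - t1)^-1 * (r1 - r2))).
  have /(linear_graphZ (t2 - t1)^-1 Glin) := GD _ _ _ _ (-1) G1 G2.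
  by rewrite scaleN1r mulN1r Eu scalerA mulVf ?scale1r // subr_eq0 eq_sym.
- move=> _ _ _ _ a [u1 [r1 [t1 [G1 [-> ->]]]]] [u2 [r2 [t2 [G2 [-> ->]]]]].
  exists (u1 + a *: u2), (r1 + a * r2), (t1 + a * t2); split; first exact: GD.
  congr pair; last by ring.
  by rewrite scalerDr scalerDl scalerA addrACA.
Qed.

Lemma graph_ext_dominated c :
  (forall u r, G (u, r) -> r - p (u - g0) <= c /\ c <= p (u + g0) - r) ->
  dominated (graph_ext G g0 c).
Proof.
move=> cG _ _ [u [r [t [Gu [-> ->]]]]]; have [Du pu] := Gdom Gu.
split; first exact: DD.
have rescale s w : 0 < s -> D w -> s * p (s^-1 *: u + w) = p (u + s *: w).
  move=> s0 Dw; rewrite -p_homo //; last by rewrite addrC; exact: DD.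
  by rewrite scalerDr scalerA mulfV ?gt_eqF ?scale1r.
have Gs s : G (s^-1 *: u, s^-1 * r) by exact: linear_graphZ.
have [t0|t0|->] := ltgtP t 0; last by rewrite scale0r mul0r !addr0.
- have s0 : 0 < - t by rewrite oppr_gt0.
  have Dg0N : D (- g0) by rewrite -scaleN1r; exact: DZ.
  have := ler_wpM2l (ltW s0) (cG _ _ (Gs (- t))).1.
  rewrite mulrBr mulrA mulfV ?gt_eqF // mul1r -[_ *: u - g0]/(_ *: u + - g0).
  by rewrite rescale // scalerN scaleNr opprK mulNr; lra.
- have := ler_wpM2l (ltW t0) (cG _ _ (Gs t)).2.
  by rewrite mulrBr mulrA mulfV ?gt_eqF // mul1r rescale //; lra.
Qed.

End extension.

Lemma chain_union (G0 : set (V * R)) (F : set (set (V * R))) :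
  linear_graph G0 -> dominated G0 ->
  (forall X, F X -> linear_graph (G0 `|` X) /\ dominated (G0 `|` X)) ->
  total_on F subset ->
  let U := G0 `|` \bigcup_(X in F) X in linear_graph U /\ dominated U.
Proof.
move=> G0lin G0dom FP Ftot U.
have common e1 e2 : U e1 -> U e2 -> exists Y, [/\ linear_graph Y, dominated Y,
    Y `<=` U, Y e1 & Y e2].
  have FU X : F X -> G0 `|` X `<=` U by move=> FX e [?|?]; [left|right; exists X].
  move=> [G01|[X1 FX1 X1e]] [G02|[X2 FX2 X2e]].
  - by exists G0; split=> // e; left.
  - by have [? ?] := FP _ FX2; exists (G0 `|` X2); split=> //; [exact: FU|left|right].
  - by have [? ?] := FP _ FX1; exists (G0 `|` X1); split=> //; [exact: FU|right|left].
  - have [X12|X21] := Ftot _ _ FX1 FX2.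
      have [? ?] := FP _ FX2; exists (G0 `|` X2).
      by split=> //; [exact: FU|right; exact: X12|right].
    have [? ?] := FP _ FX1; exists (G0 `|` X1).
    by split=> //; [exact: FU|right|right; exact: X21].
split; last by move=> u r Ue; have [Y [_ Ydom _ Ye _]] := common _ _ Ue Ue; exact: Ydom.
have [G00 _ _] := G0lin; split; first by left.
  move=> u r s Ur Us; have [Y [[_ Yfun _] _ _ Yr Ys]] := common _ _ Ur Us.
  exact: Yfun Yr Ys.
move=> u v r s a Ur Us; have [Y [[_ _ YD] _ YU Yr Ys]] := common _ _ Ur Us.
exact/YU/YD.
Qed.

(* Zorn is applied to the sets X such that G0 `|` X is a dominated linear
   graph, so that the empty chain needs no special treatment. *)
Theorem hahn_banach (G0 : set (V * R)) : linear_graph G0 -> dominated G0 ->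
  exists L : V -> R, [/\ forall u v a, D u -> D v -> L (u + a *: v) = L u + a * L v,
    forall u, D u -> L u <= p u & forall u r, G0 (u, r) -> L u = r].
Proof.
move=> G0lin G0dom.
have [A [[Glin Gdom] Amax]] := Zorn_bigcup (fun F FP tot => chain_union G0lin G0dom FP tot).
set G := G0 `|` A in Glin Gdom.
have [G00 Gfun GD] := Glin.
have total u : D u -> exists r, G (u, r).
  move=> Du; apply: contrapT => Gu.
  have [c cG] := exists_graph_ext_value Glin Gdom Du.
  have G0ext : G0 `<=` graph_ext G u c by move=> e G0e; apply: sub_graph_ext; left.
  apply: (Amax (graph_ext G u c)).
    split=> [e Ae|AG]; first by apply: sub_graph_ext; right.
    by apply: Gu; exists c; right; apply: AG; exact: graph_ext_point.
  rewrite (_ : _ `|` _ = graph_ext G u c); last by apply/seteqP; split=> // e [/G0ext|].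
  split; first by apply: graph_ext_linear => // r Gur; apply: Gu; exists r.
  exact: graph_ext_dominated.
pose L u := xget 0 [set r | G (u, r)].
have GL u : D u -> G (u, L u) by move=> /total; exact: xgetPex.
exists L; split.
- by move=> u v a Du Dv; apply: Gfun (GL _ (DD a Du Dv)) (GD _ _ _ _ a (GL _ Du) (GL _ Dv)).
- by move=> u Du; have [] := Gdom _ _ (GL _ Du).
- by move=> u r G0u; apply: Gfun (GL _ (G0dom _ _ G0u).1) _; left.
Qed.

End hahn_banach.

Section sup_range.
Variables (T : Type) (R : realType) (t0 : T).
Implicit Types (g h : T -> R).

Lemma le_sup_range g x : bounded g -> g x <= sup (range g).
Proof.
move=> [B gB]; apply: ub_le_sup; last by exists x.
by exists B => _ [y _ <-]; exact: le_trans (ler_norm _) (gB y).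
Qed.

Lemma sup_range_le g b : (forall x, g x <= b) -> sup (range g) <= b.
Proof. by move=> gb; apply: ge_sup; [exists (g t0), t0|move=> _ [x _ <-]]. Qed.

Lemma sup_rangeD g h : bounded g -> bounded h ->
  sup (range (fun x => g x + h x)) <= sup (range g) + sup (range h).
Proof. by move=> bg bh; apply: sup_range_le => x; rewrite lerD // le_sup_range. Qed.

Lemma sup_rangeZ (a : R) g : 0 < a -> bounded g ->
  sup (range (fun x => a * g x)) = a * sup (range g).
Proof.
move=> a0 bg; apply/eqP; rewrite eq_le; apply/andP; split.
  by apply: sup_range_le => x; rewrite ler_pM2l // le_sup_range.
rewrite -ler_pdivlMl //; apply: sup_range_le => x.
by rewrite ler_pdivlMl // (le_sup_range x (boundedZ a bg)).
Qed.

End sup_range.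

Section functional_measure.
Variables (T : Type) (R : realType) (t0 : T) (K : R) (L : (T -> R) -> R).
Hypothesis K0 : 0 <= K.
Hypothesis Llin : forall g h a, bounded g -> bounded h ->
  L (fun x => g x + a * h x) = L g + a * L h.
Hypothesis Ldom : forall g, bounded g -> L g <= K * sup (range g).
Implicit Types (g h : T -> R) (A : set T).

Let L0 : L (fun _ => 0) = 0 := comb_functional0 (bounded_cst 0) Llin.

Lemma functionalN g : bounded g -> L (fun x => - g x) = - L g.
Proof.
move=> bg; have := Llin (-1) (bounded_cst 0) bg.
rewrite (_ : (fun _ => _) = fun x => - g x); last by apply/funext => x; rewrite add0r mulN1r.
by rewrite L0 add0r mulN1r.
Qed.

Lemma functional_norm_le g B : (forall x, `|g x| <= B) -> `|L g| <= K * B.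
Proof.
move=> gB; have bg : bounded g by exists B.
have bNg : bounded (fun x => - g x) by exists B => x; rewrite normrN.
rewrite ler_norml lerNl -(functionalN bg); apply/andP; split.
  apply: le_trans (Ldom bNg) _; rewrite ler_wpM2l // (sup_range_le t0) // => x.
  by have := gB x; rewrite ler_norml => /andP[? _]; rewrite lerNl.
apply: le_trans (Ldom bg) _; rewrite ler_wpM2l // (sup_range_le t0) // => x.
by have := gB x; rewrite ler_norml => /andP[].
Qed.

Definition functional_measure A := L \1_A.
Local Notation mu := functional_measure.

Lemma functional_measure_ba : is_ba mu.
Proof.
split; first by rewrite /mu indic0.
split; last by exists (K * 1) => A; apply/functional_norm_le/normr_indic_le1.
move=> A B AB; rewrite /mu -[L \1_B]mul1r -(Llin 1 (bounded_indic A) (bounded_indic B)).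
by congr L; apply/funext => x; rewrite mul1r (indic_setU x AB).
Qed.

Lemma functional_measure_ge0 : positive_measure mu.
Proof.
move=> A; have bNA : bounded (fun x => - (\1_A x : R)).
  by exists 1 => x; rewrite normrN normr_indic_le1.
have : sup (range (fun x => - (\1_A x : R))) <= 0.
  by apply: (sup_range_le t0) => x; rewrite oppr_le0 indicE ler0n.
move=> /(ler_wpM2l K0); rewrite mulr0 => /(le_trans (Ldom bNA)).
by rewrite (functionalN (bounded_indic A)) /mu => ?; lra.
Qed.

Lemma functional_step_fun s : L (step_fun s) = step_sum mu s.
Proof.
elim: s => [|p s IH].
  by rewrite /step_sum big_nil -L0; congr L; apply/funext => x; rewrite /step_fun big_nil.
rewrite /step_sum big_cons -/(step_sum mu s) -IH addrC /mu.
rewrite -(Llin p.1 (bounded_step_fun s) (bounded_indic p.2)).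
by congr L; apply/funext => x; rewrite /step_fun big_cons addrC.
Qed.

Lemma is_ba_integral_functional g : bounded g -> is_ba_integral mu g (L g).
Proof.
move=> bg; apply/is_ba_integralP => e e0.
have d0 : 0 < e / (K + 1) by rewrite divr_gt0 // ltr_wpDl.
exists (e / (K + 1)) => // s gs.
rewrite -functional_step_fun -mulN1r -(Llin _ (bounded_step_fun s) bg).
apply: le_trans (functional_norm_le (B := e / (K + 1)) _) _.
  by move=> x; rewrite mulN1r; exact: step_fun_approx.
by rewrite mulrA ler_pdivrMr ?ltr_wpDl // mulrDr mulr1 mulrC lerDl ltW.
Qed.

Lemma ba_norm_functional : ba_norm mu = L (fun _ => 1).
Proof.
have [mu0 [muD _]] := functional_measure_ba.
by rewrite ba_norm_positive //; [rewrite /mu indicT | exact: functional_measure_ge0].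
Qed.

End functional_measure.

Section de_leeuw.
Variables (R : realType) (M : Type) (d : M -> M -> R) (x0 : M).
Hypothesis dm : is_metric d.
Local Notation T := (Mtilde M).
Local Notation Phi := (deLeeuw d).
Implicit Types (f g : M -> R) (t : T).

Lemma metric_gt0 x y : x <> y -> 0 < d x y.
Proof.
case: dm => d0 [dC dtri] xy; have := dtri x y x.
rewrite (dC y x) (proj2 (d0 x x) erefl) -mulr2n pmulrn_lge0 // lt_neqAle => ->.
by rewrite andbT; apply/eqP => /esym /d0.
Qed.

Definition Mtilde_pair x y (xy : x <> y) : T :=
  exist (fun p : M * M => p.1 <> p.2) (x, y) xy.

Definition Mtilde_swap t : T := Mtilde_pair (fun e => svalP t (esym e)).

Lemma deLeeuw_swap f t : Phi f (Mtilde_swap t) = - Phi f t.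
Proof. by case: dm => _ [dC _]; rewrite /deLeeuw /= dC -mulNr opprB. Qed.

Lemma norm_deLeeuw f x y (xy : x <> y) :
  `|Phi f (Mtilde_pair xy)| = `|f x - f y| / d x y.
Proof. by rewrite /deLeeuw /= normrM normfV (gtr0_norm (metric_gt0 xy)). Qed.

Lemma bounded_deLeeuw f : Lip0 d x0 f -> bounded (Phi f).
Proof.
move=> [[L fL] _]; exists L => -[[x y] xy].
by rewrite norm_deLeeuw ler_pdivrMr ?(metric_gt0 xy).
Qed.

Lemma deLeeuw_comb f g a :
  Phi (fun x => f x + a * g x) = fun t => Phi f t + a * Phi g t.
Proof. by apply/funext => t; rewrite /deLeeuw; ring. Qed.

Lemma Lip0_0 : Lip0 d x0 (fun _ => 0).
Proof. by split=> //; exists 0 => x y; rewrite subrr normr0 mul0r. Qed.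

Lemma Lip0_comb f g a : Lip0 d x0 f -> Lip0 d x0 g -> Lip0 d x0 (fun x => f x + a * g x).
Proof.
move=> [[Lf fL] f0] [[Lg gL] g0]; split; last by rewrite f0 g0 mulr0 addr0.
exists (Lf + `|a| * Lg) => x y.
have -> : f x + a * g x - (f y + a * g y) = (f x - f y) + a * (g x - g y) by ring.
rewrite (le_trans (ler_normD _ _)) // normrM mulrDl -mulrA lerD //.
by rewrite ler_wpM2l.
Qed.

Lemma Lip0_trivial f : (forall x y : M, x = y) -> Lip0 d x0 f -> f = fun _ => 0.
Proof. by move=> Mtriv [_ f0]; apply/funext => x; rewrite (Mtriv x x0). Qed.

Lemma deLeeuw_inj f g : Lip0 d x0 f -> Lip0 d x0 g -> Phi f = Phi g -> f = g.
Proof.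
move=> [_ f0] [_ g0] fg; apply/funext => x; have [->|xx0] := pselect (x = x0).
  by rewrite f0 g0.
have := congr1 (fun h => h (Mtilde_pair xx0)) fg.
by rewrite /deLeeuw /= f0 g0 !subr0 => /divIf; apply; rewrite gt_eqF ?(metric_gt0 xx0).
Qed.

Lemma lipnorm_deLeeuw f : lipnorm d f = sup (range (fun t => `|Phi f t|)).
Proof.
congr sup; apply/seteqP; split=> [_ [x [y [xy ->]]]|_ [[[x y] /= xy] _ <-]].
  by exists (Mtilde_pair xy) => //; rewrite norm_deLeeuw.
by exists x, y; split=> //; rewrite -(norm_deLeeuw f xy).
Qed.

Lemma deLeeuw_le_lipnorm f t : Lip0 d x0 f -> `|Phi f t| <= lipnorm d f.
Proof.
move=> Lf; rewrite lipnorm_deLeeuw; apply: (le_sup_range t).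
by have [B fB] := bounded_deLeeuw Lf; exists B => u; rewrite normr_id.
Qed.

End de_leeuw.

Section dominated_functional.
Variables (R : realType) (M : Type) (d : M -> M -> R) (x0 : M).
Hypothesis dm : is_metric d.
Local Notation T := (Mtilde M).
Local Notation Phi := (deLeeuw d).
Variables (t0 : T) (K : R) (V : (M -> R) -> R).
Hypothesis K0 : 0 <= K.
Hypothesis Vlin : forall f g a, Lip0 d x0 f -> Lip0 d x0 g ->
  V (fun x => f x + a * g x) = V f + a * V g.
Hypothesis Vdom : forall f (b : R), Lip0 d x0 f -> (forall t, `|Phi f t| <= b) ->
  V f <= K * b.

Let V0 : V (fun _ => 0) = 0 := comb_functional0 (Lip0_0 d x0) Vlin.

Definition deLeeuw_graph : set ((T -> R^o) * R) :=
  [set e | exists f c, Lip0 d x0 f /\ e = ((fun t => Phi f t + c), V f + c * K)].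

Lemma deLeeuw_graph_linear : linear_graph deLeeuw_graph.
Proof.
split.
- exists (fun _ => 0), 0; split; first exact: Lip0_0.
  congr pair; last by rewrite V0 mul0r addr0.
  by apply/funext => t; rewrite /deLeeuw subrr mul0r addr0.
- move=> _ r s [f [c [Lf [-> ->]]]] [g [c' [Lg [E ->]]]].
  have Et t : Phi f t + c = Phi g t + c' by exact: (congr1 (fun h => h t) E).
  have cc' : c = c'.
    by have := Et t0; have := Et (Mtilde_swap t0); rewrite !deLeeuw_swap //; lra.
  suff -> : f = g by rewrite cc'.
  by apply: (deLeeuw_inj dm Lf Lg); apply/funext => t; have := Et t; rewrite cc' => /addIr.
- move=> _ _ _ _ a [f [c [Lf [-> ->]]]] [g [c' [Lg [-> ->]]]].
  exists (fun x => f x + a * g x), (c + a * c'); split; first exact: Lip0_comb.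
  rewrite Vlin // deLeeuw_comb; congr pair; last by ring.
  by apply/funext => t; rewrite addrfctE scalrfctE /= -[a *: _]/(a * _); ring.
Qed.

Lemma deLeeuw_graph_dominated :
  dominated (@bounded T R : set (T -> R^o)) (fun g => K * sup (range g)) deLeeuw_graph.
Proof.
move=> _ _ [f [c [Lf [-> ->]]]].
have bfc := boundedD (bounded_deLeeuw dm Lf) (bounded_cst c); split=> //.
have ub t : Phi f t + c <= sup (range (fun t => Phi f t + c)) := le_sup_range t bfc.
have /(Vdom Lf) : forall t, `|Phi f t| <= sup (range (fun t => Phi f t + c)) - c.
  move=> t; have := ub t; have := ub (Mtilde_swap t).
  by rewrite deLeeuw_swap // ler_norml => ? ?; apply/andP; split; lra.
by rewrite mulrBr mulrC; lra.
Qed.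

Lemma functional_repr : exists mu, is_ba mu /\ positive_measure mu /\
  (forall f, Lip0 d x0 f -> Phistar d mu f = V f) /\ ba_norm mu = K.
Proof.
have bD (u v : T -> R^o) a : bounded u -> bounded v -> bounded (u + a *: v).
  exact: bounded_comb.
have psub (u v : T -> R^o) : bounded u -> bounded v ->
    K * sup (range (u + v)) <= K * sup (range u) + K * sup (range v).
  by move=> bu bv; rewrite -mulrDr ler_wpM2l // (sup_rangeD t0).
have phomo (a : R) (u : T -> R^o) : 0 < a -> bounded u ->
    K * sup (range (a *: u)) = a * (K * sup (range u)).
  by move=> a0 bu; rewrite (sup_rangeZ t0) // mulrCA.
have [L [Llin Ldom Lext]] := hahn_banach (bounded_cst 0) bD psub phomo
  deLeeuw_graph_linear deLeeuw_graph_dominated.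
have {}Llin g h a : bounded g -> bounded h -> L (fun x => g x + a * h x) = L g + a * L h.
  exact: Llin.
have LPhi f c : Lip0 d x0 f -> L (fun t => Phi f t + c) = V f + c * K.
  by move=> Lf; apply: Lext; exists f, c.
exists (functional_measure L); split; [|split; [|split]].
- exact: (functional_measure_ba t0 K0 Llin Ldom).
- exact: (functional_measure_ge0 t0 K0 Llin Ldom).
- move=> f Lf; have bf := bounded_deLeeuw dm Lf.
  rewrite /Phistar (ba_integralE bf (is_ba_integral_functional t0 K0 Llin Ldom bf)).
  by have := LPhi f 0 Lf; rewrite mul0r !addr0; under eq_fun do rewrite addr0.
- rewrite (ba_norm_functional t0 K0 Llin Ldom).
  have := LPhi _ 1 (Lip0_0 d x0); rewrite V0 mul1r add0r => <-.
  by congr L; apply/funext => t; rewrite /deLeeuw subrr mul0r add0r.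
Qed.

End dominated_functional.

Section Phistar_ba.
Variables (R : realType) (M : Type) (d : M -> M -> R) (x0 : M).
Hypothesis dm : is_metric d.
Variable nu : set (Mtilde M) -> R.
Hypothesis nuba : is_ba nu.

Lemma Phistar_comb f g a : Lip0 d x0 f -> Lip0 d x0 g ->
  Phistar d nu (fun x => f x + a * g x) = Phistar d nu f + a * Phistar d nu g.
Proof.
have [nu0 [nuD [C nuC]]] := nuba => Lf Lg.
by rewrite /Phistar deLeeuw_comb
  (ba_integral_lin nu0 nuD nuC a (bounded_deLeeuw dm Lf) (bounded_deLeeuw dm Lg)).
Qed.

Lemma Phistar_dominated (t0 : Mtilde M) f b : Lip0 d x0 f ->
  (forall t, `|deLeeuw d f t| <= b) -> Phistar d nu f <= ba_norm nu * b.
Proof.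
have [nu0 [nuD [C nuC]]] := nuba => Lf fb; rewrite mulrC.
apply: le_trans (ler_norm _) (ba_integral_norm_le nu0 nuD nuC _ fb).
exact: le_trans (normr_ge0 _) (fb t0).
Qed.

End Phistar_ba.

Section dual_norm.
Variables (R : realType) (M : Type) (d : M -> M -> R) (x0 : M).
Hypothesis dm : is_metric d.
Local Notation Phi := (deLeeuw d).
Variable F : (M -> R) -> R.
Hypothesis Flin : forall f g (a : R), Lip0 d x0 f -> Lip0 d x0 g ->
  F (fun x => f x + a * g x) = F f + a * F g.
Variable C : R.
Hypothesis FC : forall f, Lip0 d x0 f -> `|F f| <= C * lipnorm d f.
Variable t0 : Mtilde M.
Implicit Types (f g : M -> R).

Lemma lipnorm_le f b : (forall t, `|Phi f t| <= b) -> lipnorm d f <= b.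
Proof. by rewrite (lipnorm_deLeeuw dm); exact: sup_range_le. Qed.

Lemma le_dual_norm f : Lip0 d x0 f -> lipnorm d f <= 1 -> `|F f| <= dual_norm d x0 F.
Proof.
move=> Lf f1; apply: ub_le_sup; last by exists f.
exists `|C| => _ [g [Lg [g1 ->]]]; apply: le_trans (FC Lg) _.
have l0 := le_trans (normr_ge0 _) (deLeeuw_le_lipnorm dm t0 Lg).
by rewrite (le_trans (ler_wpM2r l0 (ler_norm C))) // ler_piMr.
Qed.

Lemma dual_norm_ge0 : 0 <= dual_norm d x0 F.
Proof.
apply: le_trans (normr_ge0 (F (fun _ => 0))) (le_dual_norm (Lip0_0 d x0) _).
by apply: lipnorm_le => t; rewrite /deLeeuw subrr mul0r normr0.
Qed.

Lemma norm_dual_le f : Lip0 d x0 f -> `|F f| <= dual_norm d x0 F * lipnorm d f.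
Proof.
move=> Lf; set l := lipnorm d f.
have [l0|ln0] := eqVneq l 0; first by have := FC Lf; rewrite -/l l0 !mulr0.
have lp : 0 < l by rewrite lt0r ln0 (le_trans _ (deLeeuw_le_lipnorm dm t0 Lf)).
have := le_dual_norm (Lip0_comb l^-1 (Lip0_0 d x0) Lf).
rewrite (Flin l^-1 (Lip0_0 d x0) Lf) (comb_functional0 (Lip0_0 d x0) Flin) add0r.
rewrite normrM gtr0_norm ?invr_gt0 // mulrC ler_pdivrMr // => -> //.
apply: lipnorm_le => t; rewrite deLeeuw_comb /deLeeuw subrr mul0r add0r -/(Phi f t).
by rewrite normrM gtr0_norm ?invr_gt0 // mulrC ler_pdivrMr // mul1r (deLeeuw_le_lipnorm dm t Lf).
Qed.

Lemma dual_norm_dominated f (b : R) : Lip0 d x0 f -> (forall t, `|Phi f t| <= b) ->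
  F f <= dual_norm d x0 F * b.
Proof.
move=> Lf fb; apply: le_trans (ler_norm _) (le_trans (norm_dual_le Lf) _).
by rewrite ler_wpM2l ?dual_norm_ge0 ?lipnorm_le.
Qed.

End dual_norm.

Lemma dual_norm_trivial (R : realType) (M : Type) (d : M -> M -> R) (x0 : M)
    (F : (M -> R) -> R) : (forall x y : M, x = y) -> Lip0_dual d x0 F ->
  dual_norm d x0 F = 0.
Proof.
move=> Mtriv [Flin _]; have F0 := comb_functional0 (Lip0_0 d x0) Flin.
rewrite /dual_norm (_ : [set r | _] = [set 0]) ?sup1 //.
apply/seteqP; split=> [_ [f [/(Lip0_trivial Mtriv) -> [_ ->]]]|_ ->] /=.
  by rewrite F0 normr0.
exists (fun _ => 0); rewrite F0 normr0; split; first exact: Lip0_0.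
rewrite /lipnorm (_ : [set r | _] = set0) ?sup0 //.
by apply/seteqP; split=> // r [x [y [xy _]]]; exact: xy.
Qed.

Theorem proposition2p4 (R : realType) (M : Type) (d : M -> M -> R) (x0 : M) :
  is_metric d ->
  (forall nu : set (Mtilde M) -> R, is_ba nu ->
     exists mu : set (Mtilde M) -> R,
       is_ba mu /\ positive_measure mu /\
       (forall f, Lip0 d x0 f -> Phistar d mu f = Phistar d nu f) /\
       ba_norm mu = ba_norm nu) /\
  (forall F : (M -> R) -> R, Lip0_dual d x0 F ->
     exists mu : set (Mtilde M) -> R,
       is_ba mu /\ positive_measure mu /\
       (forall f, Lip0 d x0 f -> Phistar d mu f = F f) /\
       ba_norm mu = dual_norm d x0 F).
Proof.
move=> dm; have [[t0 _]|noT] := pselect (exists t : Mtilde M, True).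
  split=> [nu nuba|F [Flin [C FC]]].
    have [nu0 [nuD [C nuC]]] := nuba.
    apply: (functional_repr dm t0 (ba_norm_ge0 nu0 nuD nuC) (Phistar_comb dm nuba)).
    exact: (Phistar_dominated nuba t0).
  apply: (functional_repr dm t0 (dual_norm_ge0 dm FC t0) Flin).
  exact: (dual_norm_dominated dm Flin FC t0).
have Mtriv (x y : M) : x = y by apply: contrapT => xy; apply: noT; exists (Mtilde_pair xy).
have emptyE (A : set (Mtilde M)) : A = set0.
  by apply/seteqP; split=> // t _; apply: noT; exists t.
split=> [nu nuba|F FF].
  by exists nu; do 3?split=> //; move=> A; rewrite (emptyE A); case: nuba => ->.
have ba0 : is_ba (fun _ : set (Mtilde M) => 0 : R).
  by do 2?split=> //; [move=> A B _; rewrite addr0|exists 0 => A; rewrite normr0].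
exists (fun _ => 0); split; first exact: ba0.
split=> //; split; last first.
  by rewrite dual_norm_trivial // ba_norm_positive // => A B _; rewrite addr0.
move=> f Lf; have [Flin _] := FF.
rewrite /Phistar (ba_integral0 (bounded_deLeeuw dm Lf)) (Lip0_trivial Mtriv Lf).
by rewrite (comb_functional0 (Lip0_0 d x0) Flin).
Qed.
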